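(* Let $\mathbf u$ be an aperiodic infinite word over a finite alphabet whose language is closed under reversal. Then the following are equivalent: (1) there exists $H\in\mathbb N$ such that for every prefix $w$ of $\mathbf u$ with $|w|\ge H$, the longest palindromic suffix of $w$ occurs in $w$ exactly once; (2) there exists $N\in\mathbb N$ such that for every factor $w$ of $\mathbf u$ with $|w|\ge N$, every factor $v$ of $\mathbf u$ with $|v|>|w|$ which begins with $w$ or $\overline w$, ends with $w$ or $\overline w$, and contains no other occurrences of $w$ or $\overline w$ (i.e. $w,\overline w$ occur in $v$ only as its prefix and as its suffix), is a palindrome.
   Context: An infinite word is aperiodic if it is not eventually periodic. For a finite word $w=w_0\cdots w_{n-1}$ its reversal is $\overline{w}=w_{n-1}\cdots w_0$; $w$ is a palindrome if $w=\overline{w}$ (the empty word is a palindrome). The language of $\mathbf u$ is closed under reversal if the reversal of every factor of $\mathbf u$ is again a factor of $\mathbf u$. *)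

From mathcomp Require Import all_boot.
Set Implicit Arguments. Unset Strict Implicit. Unset Printing Implicit Defensive.

Section Words.
Variable A : finType.

Definition subword (u : nat -> A) (i n : nat) : seq A := [seq u (i + k) | k <- iota 0 n].

Definition uprefix (u : nat -> A) (n : nat) : seq A := subword u 0 n.

Definition is_factor (u : nat -> A) (w : seq A) : Prop := exists i, w = subword u i (size w).

Definition eventually_periodic (u : nat -> A) : Prop :=
  exists p n0, 0 < p /\ forall n, n0 <= n -> u (n + p) = u n.

Definition aperiodic (u : nat -> A) : Prop := ~ eventually_periodic u.

Definition closed_under_reversal (u : nat -> A) : Prop :=
  forall w, is_factor u w -> is_factor u (rev w).

Definition palindrome (w : seq A) : bool := w == rev w.

Definition occurs_at (s w : seq A) (i : nat) : bool :=
  (i + size s <= size w) && (take (size s) (drop i w) == s).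

Definition occ (s w : seq A) : nat := count (occurs_at s w) (iota 0 (size w).+1).

(* longest palindromic suffix: drop the fewest letters so that the rest is a
   palindrome (the empty suffix is a palindrome, so this is well defined) *)
Definition lps (w : seq A) : seq A :=
  drop (find (fun i => palindrome (drop i w)) (iota 0 (size w).+1)) w.

End Words.

(* (1) -> (2), by induction on the end n of a complete return v to {w, rev w}
   ending the prefix of length n: let L be the longest palindromic suffix of
   that prefix, which occurs only once.  If L started strictly inside v, then
   either L is no longer than w and reappears in the first block of v, or L
   contains the last block of v and its mirror image is an interior occurrence
   of w or rev w.  If L starts before v, reflecting v in L yields a complete
   return ending earlier, a palindrome by induction; if L starts with v, v = L.
   (2) -> (1): first occurrences of the factors of length N are bounded.  In a
   long prefix, the factor from the last earlier occurrence of its final N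
   letters (or of their reversal) to the end is a complete return, hence a
   palindrome, so the longest palindromic suffix is longer than N; an earlier
   occurrence of it would likewise give a longer palindromic suffix. *)

From mathcomp Require Import all_boot zify.
From Stdlib Require Import Classical.
Set Implicit Arguments. Unset Strict Implicit. Unset Printing Implicit Defensive.

Section FiniteWords.
Variable A : finType.
Implicit Types s w x : seq A.

Lemma palindrome_rev w : palindrome (rev w) = palindrome w.
Proof. by rewrite /palindrome revK eq_sym. Qed.

Lemma lpsP w : exists k, [/\ k <= size w, lps w = drop k w, palindrome (drop k w)
  & forall j, j <= size w -> palindrome (drop j w) -> k <= j].
Proof.
set P := fun i => palindrome (drop i w).
have has_pal : has P (iota 0 (size w).+1).
  by apply/hasP; exists (size w); [rewrite mem_iota add0n ltnSn | rewrite /P /= drop_size].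
have := has_pal; rewrite has_find size_iota ltnS => find_le.
exists (find P (iota 0 (size w).+1)); split => //.
- by have := nth_find 0 has_pal; rewrite nth_iota.
- move=> j le_jw Pj; rewrite leqNgt; apply/negP => lt_j.
  by have := before_find 0 lt_j; rewrite nth_iota ?add0n ?ltnS // /P Pj.
Qed.

Lemma occurs_at_size s x t : occurs_at s x t -> t + size s <= size x.
Proof. by case/andP. Qed.

Lemma occ_eq1_uniq s x t1 t2 :
  occ s x = 1 -> occurs_at s x t1 -> occurs_at s x t2 -> t1 = t2.
Proof.
move=> occ1 occ_t1 occ_t2; apply/eqP; apply: contraFT (ltnn 1) => ne_t12.
have in_occs t : occurs_at s x t -> t \in filter (occurs_at s x) (iota 0 (size x).+1).
  by move=> occ_t; rewrite mem_filter occ_t mem_iota /=; have := occurs_at_size occ_t; lia.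
rewrite -{2}occ1 /occ -size_filter.
apply: (uniq_leq_size (s1 := [:: t1; t2])); first by rewrite /= inE ne_t12.
by move=> t; rewrite !inE => /orP[] /eqP->; apply: in_occs.
Qed.

Lemma occ_eq1 s x k :
  occurs_at s x k -> (forall t, occurs_at s x t -> t = k) -> occ s x = 1.
Proof.
move=> occ_k uniq_k; rewrite /occ (@eq_in_count _ _ (pred1 k)).
  rewrite count_uniq_mem ?iota_uniq // mem_iota /=.
  by have := occurs_at_size occ_k; case: ltnP => //; lia.
by move=> t _ /=; apply/idP/eqP => [/uniq_k | ->].
Qed.

Lemma rev_mem_word_or_rev w x : x \in [:: w; rev w] -> rev x \in [:: w; rev w].
Proof. by rewrite !inE => /orP[]/eqP->; rewrite ?revK eqxx ?orbT. Qed.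

Lemma mem_word_or_rev_sym w x y :
  x \in [:: w; rev w] -> y \in [:: w; rev w] -> x \in [:: y; rev y].
Proof. by rewrite !inE => /orP[]/eqP-> /orP[]/eqP->; rewrite ?revK eqxx ?orbT. Qed.

Definition occurs_or_rev_at w x t := occurs_at w x t || occurs_at (rev w) x t.

Definition complete_return w x :=
  [/\ occurs_or_rev_at w x 0, occurs_or_rev_at w x (size x - size w)
    & forall t, occurs_or_rev_at w x t -> t = 0 \/ t = size x - size w].

Lemma occurs_at_rev s x t : occurs_at s (rev x) t =
  (t + size s <= size x) && occurs_at (rev s) x (size x - size s - t).
Proof.
rewrite /occurs_at !size_rev; case: leqP => //= le_tx.
have -> : size x - size s - t + size s <= size x by lia.
rewrite /= drop_rev take_rev size_takel ?leq_subr // take_drop.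
have -> : size s + (size x - size s - t) = size x - t by lia.
have -> : size x - t - size s = size x - size s - t by lia.
by rewrite -(inj_eq (inv_inj (@revK A))) revK.
Qed.

Lemma occurs_or_rev_at_rev w x t : occurs_or_rev_at w (rev x) t =
  (t + size w <= size x) && occurs_or_rev_at w x (size x - size w - t).
Proof.
rewrite /occurs_or_rev_at !occurs_at_rev revK size_rev.
by case: (_ <= _); rewrite //= orbC.
Qed.

Lemma complete_return_rev w x :
  size w <= size x -> complete_return w x -> complete_return w (rev x).
Proof.
move=> le_wx [occ_0 occ_end occ_uniq]; split; rewrite ?size_rev.
- by rewrite occurs_or_rev_at_rev add0n le_wx subn0.
- by rewrite occurs_or_rev_at_rev subnK // subnn leqnn occ_0.
- by move=> t; rewrite occurs_or_rev_at_rev => /andP[le_t /occ_uniq]; lia.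
Qed.

End FiniteWords.

Lemma bounded_witnesses (T : eqType) (s : seq T) (P : T -> nat -> Prop) :
  exists B, forall x, x \in s -> (exists i, P x i) -> exists2 j, j <= B & P x j.
Proof.
elim: s => [|x s [B IH]]; first by exists 0.
have [[i Pi] | noP] := classic (exists i, P x i).
- exists (maxn B i) => y; rewrite inE => /predU1P[-> _ | /IH y_s /y_s[j le_jB Pj]].
  + by exists i; rewrite ?leq_maxr.
  + by exists j; rewrite // (leq_trans le_jB) ?leq_maxl.
- by exists B => y; rewrite inE => /predU1P[-> /noP [] | /IH].
Qed.

Section InfiniteWord.
Variables (A : finType) (u : nat -> A).

Lemma size_subword a m : size (subword u a m) = m.
Proof. by rewrite size_map size_iota. Qed.

Lemma nth_subword x0 a m k : k < m -> nth x0 (subword u a m) k = u (a + k).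
Proof. by move=> lt_km; rewrite (nth_map 0) ?size_iota // nth_iota. Qed.

Lemma drop_subword d a m : drop d (subword u a m) = subword u (a + d) (m - d).
Proof.
apply: (@eq_from_nth _ (u 0)) => [|k]; rewrite size_drop !size_subword // => lt_k.
by rewrite nth_drop !nth_subword ?addnA //; lia.
Qed.

Lemma take_subword c a m : c <= m -> take c (subword u a m) = subword u a c.
Proof.
move=> le_cm; apply: (@eq_from_nth _ (u 0)) => [|k]; rewrite size_takel ?size_subword //.
by move=> lt_kc; rewrite nth_take // !nth_subword //; lia.
Qed.

Lemma occurs_at_subword s a m t : occurs_at s (subword u a m) t =
  (t + size s <= m) && (subword u (a + t) (size s) == s).
Proof.
rewrite /occurs_at size_subword; case: leqP => //= le_tm.
by rewrite drop_subword take_subword //; lia.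
Qed.

Lemma occurs_or_rev_at_subword w a m t : occurs_or_rev_at w (subword u a m) t =
  (t + size w <= m) && (subword u (a + t) (size w) \in [:: w; rev w]).
Proof. by rewrite /occurs_or_rev_at !occurs_at_subword size_rev !inE; case: leqP. Qed.

Lemma occurs_at_uprefix n t m : t + m <= n -> occurs_at (subword u t m) (uprefix u n) t.
Proof. by move=> le_tmn; rewrite occurs_at_subword size_subword le_tmn eqxx. Qed.

Lemma lps_uprefixP n : exists k, [/\ k <= n,
  lps (uprefix u n) = subword u k (n - k), palindrome (subword u k (n - k))
  & forall j, j <= n -> palindrome (subword u j (n - j)) -> k <= j].
Proof.
have [k [le_kn -> pal_k min_k]] := lpsP (uprefix u n).
rewrite /uprefix size_subword drop_subword in le_kn pal_k *.
exists k; split => // j le_jn pal_j.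
by apply: min_k; rewrite /uprefix ?size_subword // drop_subword.
Qed.

Lemma rev_subword_pal_suffix k j n : palindrome (subword u k (n - k)) ->
  k <= j <= n -> rev (subword u j (n - j)) = subword u k (n - j).
Proof.
move=> /eqP pal /andP[le_kj le_jn].
have suff_j : subword u j (n - j) = drop (j - k) (subword u k (n - k)).
  by rewrite drop_subword; congr subword; lia.
rewrite suff_j; have -> : j - k = size (subword u k (n - k)) - (n - j).
  by rewrite size_subword; lia.
by rewrite -take_rev -pal take_subword //; lia.
Qed.

Lemma pal_suffix_start_le_return n i w k : k <= n ->
  size w < n - i -> complete_return w (subword u i (n - i)) ->
  palindrome (subword u k (n - k)) -> occ (subword u k (n - k)) (uprefix u n) = 1 ->
  k <= i.
Proof.
move=> le_kn lt_wv [occ_0 occ_end occ_uniq] /eqP pal occ1.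
rewrite leqNgt; apply/negP => lt_ik.
rewrite size_subword in occ_end occ_uniq.
move: occ_0; rewrite occurs_or_rev_at_subword addn0 => /andP[_ first_w].
move: occ_end; rewrite occurs_or_rev_at_subword => /andP[_].
have -> : i + (n - i - size w) = n - size w by lia.
set e := subword u (n - size w) (size w) => last_w.
case: (leqP (n - k) (size w)) => [le_lps_w | lt_w_lps].
- set L := subword u k (n - k) in pal occ1 *.
  have L_e : drop (size w - (n - k)) e = L.
    by rewrite /L drop_subword; congr subword; lia.
  have L_rev_e : take (n - k) (rev e) = L by rewrite take_rev size_subword L_e -pal.
  have [p le_p occ_p] : exists2 p, p <= size w - (n - k) & subword u (i + p) (n - k) = L.
    move: (mem_word_or_rev_sym first_w last_w); rewrite !inE => /orP[]/eqP first_e.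
    + by exists (size w - (n - k)); rewrite // -L_e -first_e drop_subword; congr subword; lia.
    + by exists 0; rewrite // addn0 -L_rev_e -first_e take_subword.
  have occ_ip : occurs_at L (uprefix u n) (i + p).
    by rewrite -occ_p; apply: occurs_at_uprefix; lia.
  have occ_k : occurs_at L (uprefix u n) k by apply: occurs_at_uprefix; lia.
  have := occ_eq1_uniq occ1 occ_ip occ_k; lia.
- have rev_e : rev e = subword u k (size w).
    have := @rev_subword_pal_suffix k (n - size w) n; rewrite subKn; last lia.
    by apply; [exact/eqP | lia].
  have := occ_uniq (k - i); rewrite occurs_or_rev_at_subword.
  have -> : i + (k - i) = k by lia.
  by rewrite -rev_e rev_mem_word_or_rev // andbT; lia.
Qed.

Definition lps_unioccurrent_from H :=
  forall n, H <= n -> occ (lps (uprefix u n)) (uprefix u n) = 1.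

Definition complete_returns_palindromic_from N :=
  forall w v, is_factor u w -> N <= size w -> is_factor u v -> size w < size v ->
  complete_return w v -> palindrome v.

Lemma complete_return_subword_palindrome H : lps_unioccurrent_from H ->
  forall n i w, H <= size w -> size w < n - i ->
  complete_return w (subword u i (n - i)) -> palindrome (subword u i (n - i)).
Proof.
move=> lps_once; elim/ltn_ind => n IH i w le_Hw lt_wv ret.
have [k [le_kn lps_k pal_k _]] := lps_uprefixP n.
have := lps_once n; rewrite lps_k => occ1; have {}occ1 := occ1 ltac:(lia).
move: (pal_suffix_start_le_return le_kn lt_wv ret pal_k occ1).
rewrite leq_eqVlt => /orP[/eqP <- // | lt_ki].
(* The palindromic suffix reflects [v] onto an earlier complete return. *)
have rev_v : rev (subword u i (n - i)) = subword u k (k + (n - i) - k).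
  by rewrite addKn (rev_subword_pal_suffix pal_k) //; apply/andP; lia.
rewrite -palindrome_rev rev_v; apply: (IH _ _ k w) => //; try lia.
by rewrite -rev_v; apply: complete_return_rev => //; rewrite size_subword; lia.
Qed.

Lemma complete_returns_palindromic_from_lps H :
  lps_unioccurrent_from H -> complete_returns_palindromic_from H.
Proof.
move=> lps_once w v _ le_Hw [i def_v] lt_wv ret.
have := @complete_return_subword_palindrome H lps_once (i + size v) i w le_Hw.
by rewrite addKn -def_v; apply.
Qed.

Lemma bounded_first_occurrences m :
  exists B, forall i, exists2 j, j <= B & subword u j m = subword u i m.
Proof.
have [B first_occ] := bounded_witnesses [seq tval t | t : m.-tuple A]
  (fun x i => subword u i m = x).
exists B => i; have size_i : size (subword u i m) == m by rewrite size_subword.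
apply: first_occ; last by exists i.
by rewrite (_ : subword u i m = Tuple size_i) // map_f ?mem_enum.
Qed.

Section CompleteReturnsPalindromic.
Variable N : nat.
Hypothesis returns_pal : complete_returns_palindromic_from N.

(* The factor from the last earlier occurrence of [w] or [rev w] up to the
   end of [w] is a complete return word. *)
Lemma last_return_palindrome a m j0 : N <= m -> j0 < a ->
  subword u j0 m \in [:: subword u a m; rev (subword u a m)] ->
  exists2 j, j < a & palindrome (subword u j (a + m - j)).
Proof.
move=> le_Nm lt_j0a; set w := subword u a m => occ_j0.
pose P j := (j < a) && (subword u j m \in [:: w; rev w]).
have exP : exists j, P j by exists j0; rewrite /P lt_j0a.
have ubP j : P j -> j <= a by case/andP => /ltnW.
have [j /andP[lt_ja occ_j] max_j] := ex_maxnP exP ubP.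
have size_w : size w = m by rewrite size_subword.
exists j => //; apply: (returns_pal (w := w)); rewrite ?size_w ?size_subword //; try lia.
- by exists a; rewrite size_w.
- by exists j; rewrite size_subword.
have occ_t t : occurs_or_rev_at w (subword u j (a + m - j)) t =
    (t <= a - j) && (subword u (j + t) m \in [:: w; rev w]).
  rewrite occurs_or_rev_at_subword size_w.
  by congr andb; apply/idP/idP; lia.
split; rewrite ?size_subword ?size_w ?occ_t.
- by rewrite addn0 occ_j.
- have -> : a + m - j - m = a - j by lia.
  by rewrite leqnn subnKC ?mem_head //; lia.
- move=> t; rewrite occ_t => /andP[le_t occ_jt]; case: (ltnP (j + t) a) => [lt_jta | le_ajt].
  + by have := max_j (j + t); rewrite /P lt_jta occ_jt => /(_ isT); lia.
  + by right; lia.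
Qed.

Lemma lps_unioccurrent_from_returns : exists H, lps_unioccurrent_from H.
Proof.
have [B first_occ] := bounded_first_occurrences N.
exists (B + N).+1 => n lt_n.
have [k [le_kn -> pal_k min_k]] := lps_uprefixP n.
have lt_k : k < n - N.
  have [j0 le_j0 occ_j0] := first_occ (n - N).
  have lt_j0 : j0 < n - N by lia.
  have mem_j0 : subword u j0 N \in [:: subword u (n - N) N; rev (subword u (n - N) N)].
    by rewrite occ_j0 mem_head.
  have [j lt_j] := last_return_palindrome (leqnn N) lt_j0 mem_j0.
  by rewrite subnK; [move/(min_k j) | lia]; lia.
apply: occ_eq1; first by apply: occurs_at_uprefix; lia.
move=> t; rewrite occurs_at_subword size_subword add0n => /andP[le_t occ_t].
case: (ltngtP t k) => // [lt_tk | lt_kt]; last lia.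
have le_Nk : N <= n - k by lia.
have mem_t : subword u t (n - k) \in [:: subword u k (n - k); rev (subword u k (n - k))].
  by rewrite (eqP occ_t) mem_head.
have [j lt_jk] := last_return_palindrome le_Nk lt_tk mem_t.
by rewrite subnKC //; move/(min_k j); lia.
Qed.

End CompleteReturnsPalindromic.

End InfiniteWord.

Theorem lemma14 (A : finType) (u : nat -> A) :
  aperiodic u -> closed_under_reversal u ->
  ((exists H : nat, forall n, H <= n -> occ (lps (uprefix u n)) (uprefix u n) = 1)
   <->
   (exists N : nat, forall w v : seq A,
      is_factor u w -> N <= size w ->
      is_factor u v -> size w < size v ->
      (occurs_at w v 0 || occurs_at (rev w) v 0) ->
      (occurs_at w v (size v - size w) || occurs_at (rev w) v (size v - size w)) ->
      (forall i, (occurs_at w v i || occurs_at (rev w) v i) ->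
                 i = 0 \/ i = size v - size w) ->
      palindrome v)).
Proof.
move=> _ _; split=> [[H lps_once] | [N returns_pal]].
- exists H => w v fw le_Hw fv lt_wv occ_0 occ_end occ_uniq.
  exact: complete_returns_palindromic_from_lps lps_once w v fw le_Hw fv lt_wv
    (And3 occ_0 occ_end occ_uniq).
- apply: (lps_unioccurrent_from_returns (N := N)).
  move=> w v fw le_Nw fv lt_wv [occ_0 occ_end occ_uniq].
  exact: returns_pal fw le_Nw fv lt_wv occ_0 occ_end occ_uniq.
Qed.
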